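(* Let $\mathscr X=[0,1]^d$ with the Euclidean norm $\|\cdot\|_2$, and let $\beta\in(0,\infty)$. For $\mathbf x\in\mathscr X$ and a finite set $\mathbf X_n\subset\mathscr X$ define $D_\beta(\mathbf x,\mathbf X_n,\mathscr X)=\min\{\min_{\mathbf x_i\in\mathbf X_n}\|\mathbf x-\mathbf x_i\|_2,\ \beta\,d(\mathbf x,\partial\mathscr X)\}$, where $d(\mathbf x,\partial\mathscr X)$ is the Euclidean distance from $\mathbf x$ to the boundary of $\mathscr X$. Let $\mathbf x_1\in\mathscr X$ and, for $n\ge1$, let $\mathbf x_{n+1}\in\mathrm{Arg}\max_{\mathbf x\in\mathscr X}D_\beta(\mathbf x,\mathbf X_n,\mathscr X)$ where $\mathbf X_n=\{\mathbf x_1,\ldots,\mathbf x_n\}$. Then for every $n\ge1$, $$\min_{1\le i\le n}\|\mathbf x_{n+1}-\mathbf x_i\|_2\ge a\,\mathsf{CR}(\mathbf X_n),\qquad a=\frac1{1+\sqrt d/\beta};$$ that is, this boundary-phobic algorithm is an instance of the relaxed greedy packing algorithm (in which $\mathbf x_{n+1}\in\mathscr X$ is any point with $\min_i\|\mathbf x_{n+1}-\mathbf x_i\|\ge\alpha_n\mathsf{CR}(\mathbf X_n)$) with $\alpha_n=a=1/(1+\sqrt d/\beta)$ for all $n$.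
   Context: Fill distance $\mathsf{CR}(\mathbf X_n)=\sup_{\mathbf x\in\mathscr X}\min_{i\le n}\|\mathbf x-\mathbf x_i\|_2$. *)

From HB Require Import structures.
From mathcomp Require Import all_boot all_order all_algebra.
From mathcomp Require Import all_classical all_reals.
Set Implicit Arguments. Unset Strict Implicit. Unset Printing Implicit Defensive.
Import Order.TTheory GRing.Theory Num.Theory.
Local Open Scope classical_set_scope.
Local Open Scope ring_scope.

Section Defs.
Variables (R : realType) (d : nat).
Notation pt := ('I_d -> R).

Definition cube : set pt := [set x | forall i, 0 <= x i <= 1].

Definition cube_boundary : set pt :=
  [set x | cube x /\ exists i, x i = 0 \/ x i = 1].

Definition dist2 (x y : pt) : R := Num.sqrt (\sum_i (x i - y i) ^+ 2).

Definition dist_boundary (x : pt) : R := inf [set dist2 x y | y in cube_boundary].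

Definition min_dist (X : nat -> pt) (n : nat) (x : pt) : R :=
  inf [set r | exists i, (1 <= i <= n)%N /\ r = dist2 x (X i)].

Definition Dbeta (beta : R) (X : nat -> pt) (n : nat) (x : pt) : R :=
  Num.min (min_dist X n x) (beta * dist_boundary x).

Definition CR (X : nat -> pt) (n : nat) : R := sup [set min_dist X n y | y in cube].

End Defs.

(** The point [x_(n+1)] maximises [D_beta], so it suffices to exhibit, for
    every [y] in the cube with [rho = min_dist y], a point [z] of the cube
    with [D_beta z >= a * rho].  Pushing [y] towards the centre [c] of the
    cube by a fraction [s] of the way moves it by at most [s sqrt d / 2] and
    puts it at distance at least [s / 2] from the boundary, so
    [D_beta z >= min (rho - s sqrt d / 2) (beta s / 2)]; the choice
    [s = 2 rho / (beta + sqrt d)] balances the two terms at [a * rho].  When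
    that [s] exceeds [1] one takes [z = c], which forces [x_(n+1) = c], the
    only point at distance [1/2] from the boundary, and then
    [min_dist c >= rho - sqrt d / 2 >= a * rho] directly. *)

From HB Require Import structures.
From mathcomp Require Import all_boot all_order all_algebra.
From mathcomp Require Import all_classical all_reals.
From mathcomp Require Import ring lra.
Set Implicit Arguments. Unset Strict Implicit. Unset Printing Implicit Defensive.
Import Order.TTheory GRing.Theory Num.Theory.
Local Open Scope classical_set_scope.
Local Open Scope ring_scope.

Lemma sqr_sum_mul_le (R : realFieldType) (I : finType) (a b : I -> R) :
  (\sum_i a i * b i) ^+ 2 <= (\sum_i a i ^+ 2) * (\sum_i b i ^+ 2).
Proof.
have lagrange_identity : \sum_i \sum_j (a i * b j - a j * b i) ^+ 2 =
    2 * ((\sum_i a i ^+ 2) * (\sum_j b j ^+ 2) - (\sum_i a i * b i) ^+ 2).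
  have e i j : (a i * b j - a j * b i) ^+ 2 =
      a i ^+ 2 * b j ^+ 2 + b i ^+ 2 * a j ^+ 2 - (2 * (a i * b i)) * (a j * b j).
    by ring.
  under eq_bigr => i _ do
    rewrite (eq_bigr _ (fun j _ => e i j)) sumrB big_split /= -!mulr_sumr.
  by rewrite sumrB big_split /= -!mulr_suml -mulr_sumr expr2; ring.
have : 0 <= \sum_i \sum_j (a i * b j - a j * b i) ^+ 2.
  by apply: sumr_ge0 => i _; apply: sumr_ge0 => j _; exact: sqr_ge0.
by rewrite lagrange_identity pmulr_rge0 // subr_ge0.
Qed.

Lemma sum_mul_le_sqrt (R : rcfType) (I : finType) (a b : I -> R) :
  \sum_i a i * b i <= Num.sqrt (\sum_i a i ^+ 2) * Num.sqrt (\sum_i b i ^+ 2).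
Proof.
rewrite -sqrtrM; last by apply: sumr_ge0 => i _; exact: sqr_ge0.
apply: le_trans (ler_norm _) _.
by rewrite -sqrtr_sqr ler_sqrt ?sqr_sum_mul_le // mulr_ge0 // sumr_ge0 // => i _;
  exact: sqr_ge0.
Qed.

Section EuclideanDistance.
Variables (R : realType) (d : nat).
Implicit Types x y z : 'I_d -> R.

Lemma dist2_ge0 x y : 0 <= dist2 x y.
Proof. exact: sqrtr_ge0. Qed.

Lemma dist2C x y : dist2 x y = dist2 y x.
Proof. by congr Num.sqrt; apply: eq_bigr => i _; rewrite -sqrrN opprB. Qed.

Lemma dist2_triangle x y z : dist2 x z <= dist2 x y + dist2 y z.
Proof.
rewrite /dist2; set A := Num.sqrt (\sum_i (x i - y i) ^+ 2).
set B := Num.sqrt (\sum_i (y i - z i) ^+ 2).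
have sum_sqr_ge0 (u : 'I_d -> R) : 0 <= \sum_i u i ^+ 2.
  by apply: sumr_ge0 => i _; exact: sqr_ge0.
have AB_ge0 : 0 <= A + B by rewrite addr_ge0 // sqrtr_ge0.
rewrite -(ger0_norm AB_ge0) -sqrtr_sqr ler_sqrt ?sqr_ge0 //.
have -> : \sum_i (x i - z i) ^+ 2 = \sum_i (x i - y i) ^+ 2 + \sum_i (y i - z i) ^+ 2
    + 2 * \sum_i (x i - y i) * (y i - z i).
  by rewrite mulr_sumr -!big_split /=; apply: eq_bigr => i _; ring.
have := sum_mul_le_sqrt (fun i => x i - y i) (fun i => y i - z i).
rewrite sqrrD -/A -/B -(sqr_sqrtr (sum_sqr_ge0 (fun i => x i - y i)))
  -(sqr_sqrtr (sum_sqr_ge0 (fun i => y i - z i))) -/A -/B.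
lra.
Qed.

Lemma dist2_ge_coord x y i : `|x i - y i| <= dist2 x y.
Proof.
rewrite /dist2 -sqrtr_sqr ler_sqrt; last by apply: sumr_ge0 => j _; exact: sqr_ge0.
by rewrite (bigD1 i) //= lerDl; apply: sumr_ge0 => j _; exact: sqr_ge0.
Qed.

Lemma dist2_le_coord x y r : 0 <= r ->
  (forall i, `|x i - y i| <= r) -> dist2 x y <= Num.sqrt d%:R * r.
Proof.
move=> r_ge0 le_r.
rewrite -(ger0_norm r_ge0) -sqrtr_sqr -sqrtrM // ler_sqrt ?mulr_ge0 ?sqr_ge0 //.
rewrite mulrC mulr_natr -[X in _ *+ X]card_ord -sumr_const; apply: ler_sum => i _.
by rewrite -real_normK ?num_real // lerXn2r ?nnegrE ?normr_ge0 ?le_r.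
Qed.

End EuclideanDistance.

Section MinDist.
Variables (R : realType) (d : nat) (X : nat -> 'I_d -> R) (n : nat).
Hypothesis n_gt0 : (0 < n)%N.
Implicit Types x y z : 'I_d -> R.

Lemma min_dist_le x i : (1 <= i <= n)%N -> min_dist X n x <= dist2 x (X i).
Proof.
move=> hi; apply: ge_inf; last by exists i.
by exists 0 => r [j [_ ->]]; exact: dist2_ge0.
Qed.

Lemma min_dist_ge x m :
  (forall i, (1 <= i <= n)%N -> m <= dist2 x (X i)) -> m <= min_dist X n x.
Proof.
move=> le_m; apply: lb_le_inf; last by move=> r [i [hi ->]]; exact: le_m.
by exists (dist2 x (X 1%N)); exists 1%N; rewrite leqnn n_gt0.
Qed.

Lemma min_dist_ge0 x : 0 <= min_dist X n x.
Proof. by apply: min_dist_ge => i _; exact: dist2_ge0. Qed.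

Lemma min_dist_lipschitz y z : min_dist X n y - dist2 y z <= min_dist X n z.
Proof.
apply: min_dist_ge => i hi.
have := min_dist_le y hi; have := dist2_triangle y z (X i).
rewrite [dist2 y z]dist2C; lra.
Qed.

End MinDist.

Section TowardsCentre.
Variables (R : realType) (d : nat).
Implicit Types y : 'I_d -> R.

Definition centre : 'I_d -> R := fun _ => 2^-1.

Definition towards_centre (s : R) y : 'I_d -> R := fun i => y i + s * (2^-1 - y i).

Lemma cube_towards_centre s y :
  cube y -> 0 <= s -> s <= 1 -> cube (towards_centre s y).
Proof.
move=> y_cube s0 s1 i; have /andP[y0 y1] := y_cube i.
by rewrite /towards_centre; apply/andP; split; nra.
Qed.

Lemma dist2_towards_centre s y : cube y -> 0 <= s -> s <= 1 ->
  dist2 (towards_centre s y) y <= Num.sqrt d%:R * (s / 2).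
Proof.
move=> y_cube s0 s1; apply: dist2_le_coord; first by rewrite divr_ge0.
move=> i; have /andP[y0 y1] := y_cube i.
rewrite /towards_centre addrAC subrr add0r normrM ger0_norm //.
by rewrite ler_wpM2l // ler_norml; apply/andP; split; lra.
Qed.

Lemma dist_boundary_towards_centre s y : (0 < d)%N -> cube y -> 0 <= s -> s <= 1 ->
  s / 2 <= dist_boundary (towards_centre s y).
Proof.
move=> d_gt0 y_cube s0 s1; apply: lb_le_inf.
  exists (dist2 (towards_centre s y) (fun=> 0)); exists (fun=> 0) => //.
  split; first by move=> j; rewrite lexx ler01.
  by exists (Ordinal d_gt0); left.
move=> r [w [_ [i w_i]] <-]; apply: le_trans (dist2_ge_coord _ _ i).
have /andP[y0 y1] := y_cube i; rewrite /towards_centre.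
by case: w_i => ->; [rewrite subr0 | rewrite distrC]; rewrite ger0_norm; nra.
Qed.

Lemma towards_centre1 y : towards_centre 1 y = centre.
Proof. by apply: funext => i; rewrite /towards_centre mul1r addrC subrK. Qed.

End TowardsCentre.

Arguments centre {R d}.

Section DistBoundary.
Variables (R : realType) (d : nat) (x : 'I_d -> R).
Hypothesis x_cube : cube x.

Lemma dist_boundary_le_coord i :
  dist_boundary x <= x i /\ dist_boundary x <= 1 - x i.
Proof.
have lb : has_lbound [set dist2 x y | y in @cube_boundary R d].
  by exists 0 => r [y _ <-]; exact: dist2_ge0.
have /andP[x0 x1] := x_cube i.
have proj v : v = 0 \/ v = 1 ->
    [set dist2 x y | y in @cube_boundary R d] `|x i - v|.
  move=> v01; exists (fun j => if j == i then v else x j).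
    split; last by exists i; rewrite eqxx.
    move=> j; case: ifP => _; last exact: x_cube.
    by case: v01 => ->; rewrite lexx ler01.
  rewrite /dist2 (bigD1 i) //= eqxx big1 ?addr0 ?sqrtr_sqr //.
  by move=> j /negbTE ->; rewrite subrr expr0n.
split; apply: ge_inf lb _ _.
- by have := proj 0 (or_introl erefl); rewrite subr0 ger0_norm.
- by have := proj 1 (or_intror erefl); rewrite distrC ger0_norm ?subr_ge0.
Qed.

Lemma dist_boundary_ge_half : 2^-1 <= dist_boundary x -> x = centre.
Proof.
move=> half_le; apply: funext => i; have [le_x le_1x] := dist_boundary_le_coord i.
rewrite /centre; lra.
Qed.

End DistBoundary.

Section GreedyStep.
Variables (R : realType) (d : nat) (X : nat -> 'I_d -> R) (n : nat).
Hypotheses (d_gt0 : (0 < d)%N) (n_gt0 : (0 < n)%N).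
Implicit Types (y z : 'I_d -> R).

Lemma min_dist_towards_centre (s : R) y : cube y -> 0 <= s -> s <= 1 ->
  min_dist X n y - Num.sqrt d%:R * (s / 2) <= min_dist X n (towards_centre s y).
Proof.
move=> y_cube s0 s1; apply: le_trans (min_dist_lipschitz X n_gt0 y _).
by rewrite lerD2l lerN2 dist2C dist2_towards_centre.
Qed.

Lemma Dbeta_towards_centre (beta s : R) y :
    0 <= beta -> cube y -> 0 <= s -> s <= 1 ->
  Num.min (min_dist X n y - Num.sqrt d%:R * (s / 2)) (beta * (s / 2))
    <= Dbeta beta X n (towards_centre s y).
Proof.
move=> beta_ge0 y_cube s0 s1; apply: le_min2.
  exact: min_dist_towards_centre.
by rewrite ler_wpM2l // dist_boundary_towards_centre.
Qed.

Lemma Dbeta_argmax_min_dist_ge (beta : R) x' y : 0 < beta -> cube x' ->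
    (forall z, cube z -> Dbeta beta X n z <= Dbeta beta X n x') -> cube y ->
  beta / (beta + Num.sqrt d%:R) * min_dist X n y <= min_dist X n x'.
Proof.
move=> beta_gt0 x'_cube x'_max y_cube.
set S := Num.sqrt d%:R; set rho := min_dist X n y.
have S_ge0 : 0 <= S := sqrtr_ge0 _.
have betaS_gt0 : 0 < beta + S by lra.
set k := rho / (beta + S).
have k_ge0 : 0 <= k by rewrite divr_ge0 ?min_dist_ge0 // ltW.
have rho_k : rho = k * (beta + S) by rewrite /k divfK // gt_eqF.
have -> : beta / (beta + S) * rho = beta * k by rewrite mulrAC -mulrA.
have D_le_M : Dbeta beta X n x' <= min_dist X n x' by rewrite /Dbeta ge_min lexx.
have [k_small | k_large] := lerP k 2^-1.
  have k2_ge0 : 0 <= 2 * k by lra.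
  have k2_le1 : 2 * k <= 1 by lra.
  apply: le_trans D_le_M.
  apply: le_trans (x'_max _ (cube_towards_centre y_cube k2_ge0 k2_le1)).
  apply: le_trans (Dbeta_towards_centre (ltW beta_gt0) y_cube k2_ge0 k2_le1).
  by rewrite le_min -/S -/rho; apply/andP; split; nra.
have centre_cube : cube (@centre R d).
  by rewrite -(towards_centre1 y); exact: cube_towards_centre.
have D_centre := Dbeta_towards_centre (ltW beta_gt0) y_cube ler01 (lexx 1).
rewrite towards_centre1 -/S -/rho in D_centre.
have x'_centre : x' = centre.
  apply: dist_boundary_ge_half => //; rewrite -(ler_pM2l beta_gt0).
  have : beta * 2^-1 <= Dbeta beta X n x'.
    apply: le_trans (x'_max _ centre_cube); apply: le_trans D_centre.
    by rewrite le_min; apply/andP; split; nra.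
  by move/le_trans; apply; rewrite /Dbeta ge_min lexx orbT.
have := min_dist_towards_centre y_cube ler01 (lexx 1).
by rewrite towards_centre1 -x'_centre -/S -/rho; nra.
Qed.

End GreedyStep.

Theorem theorem7 (R : realType) (d : nat) (hd : (0 < d)%N) (beta : R)
  (hbeta : 0 < beta) (x : nat -> 'I_d -> R)
  (hx1 : cube (x 1%N))
  (hstep : forall n : nat, (1 <= n)%N ->
     cube (x n.+1) /\
     (forall y : 'I_d -> R, cube y -> Dbeta beta x n y <= Dbeta beta x n (x n.+1))) :
  forall n : nat, (1 <= n)%N ->
    (1 + Num.sqrt (d%:R) / beta)^-1 * CR x n <= min_dist x n (x n.+1).
Proof.
move=> n n_gt0; have [next_cube next_max] := hstep n n_gt0.
have betaS_gt0 : 0 < beta + Num.sqrt d%:R by rewrite ltr_wpDr ?sqrtr_ge0.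
have a_gt0 : 0 < beta / (beta + Num.sqrt d%:R) by rewrite divr_gt0.
have -> : (1 + Num.sqrt d%:R / beta)^-1 = beta / (beta + Num.sqrt d%:R).
  by field; rewrite ?gt_eqF.
rewrite mulrC -ler_pdivlMr //; apply: ge_sup.
  by exists (min_dist x n (x 1%N)), (x 1%N).
move=> _ [y y_cube <-]; rewrite ler_pdivlMr // mulrC.
exact: Dbeta_argmax_min_dist_ge.
Qed.
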